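(* Let $\rho$ be a set function on subsets of $\{1,\ldots,r\}$ that is subadditive, monotone increasing, and satisfies $\rho(I)=0$ iff $I=\emptyset$, and let $\lambda_\rho=\min\{\lceil\max_S\rho(S)/\min_{S\neq\emptyset}\rho(S)\rceil,\ r\}$. For any collection $\mathcal A$ of nonempty subsets of $\{1,\ldots,r\}$, there exists a subcollection $\widehat{\mathcal A}\subseteq\mathcal A$ of size at most $\lambda_\rho$ such that $\rho\big(\bigcup_{A\in\mathcal A}A\big)\le\sum_{A\in\widehat{\mathcal A}}\rho(A)$.
   Context: Subadditive means $\rho(A\cup B)\le\rho(A)+\rho(B)$ for all sets $A,B$. *)

From HB Require Import structures.
From mathcomp Require Import all_boot all_order all_algebra.
Set Implicit Arguments. Unset Strict Implicit. Unset Printing Implicit Defensive.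
Import Order.TTheory GRing.Theory Num.Theory.
Local Open Scope ring_scope.

Section SetFun.
Variables (R : archiRealFieldType) (r : nat) (rho : {set 'I_r} -> R).

Definition subadditive := forall A B : {set 'I_r}, rho (A :|: B) <= rho A + rho B.
Definition monotone_incr := forall A B : {set 'I_r}, A \subset B -> rho A <= rho B.
Definition zero_iff_empty := forall I : {set 'I_r}, rho I = 0 <-> I = set0.

Definition rho_max : R := \big[Num.max/0]_(S : {set 'I_r}) rho S.
(* min_{S <> emptyset} rho(S)  (the seed rho_max is >= every value, so this
   is the true minimum whenever a nonempty S exists, i.e. r > 0) *)
Definition rho_min : R := \big[Num.min/rho_max]_(S : {set 'I_r} | S != set0) rho S.

Definition lambda_rho : nat := minn `|Num.ceil (rho_max / rho_min)|%N r.
End SetFun.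

From HB Require Import structures.
From mathcomp Require Import all_boot all_order all_algebra.
Import Order.TTheory GRing.Theory Num.Theory.
Set Implicit Arguments. Unset Strict Implicit. Unset Printing Implicit Defensive.
Local Open Scope ring_scope.

(* Two covers of the union U of the family are available.  Picking, for each
   point of U, one member containing it gives at most r members whose union is
   U.  On the other hand, any ceil(max rho / min rho) members (or all of them,
   if there are fewer) already have total weight at least max rho >= rho U. *)

Lemma bigcup_point_subcover (T : finType) (calA : {set {set T}}) :
  exists2 hatA : {set {set T}},
    hatA \subset calA /\ (#|hatA| <= #|\bigcup_(A in calA) A|)%N &
    \bigcup_(A in calA) A \subset \bigcup_(A in hatA) A.
Proof.
pose pick_member x := odflt set0 [pick A in calA | x \in A].
have pick_memberP x : x \in \bigcup_(A in calA) A ->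
    pick_member x \in calA /\ x \in pick_member x.
  case/bigcupP=> B BA xB; rewrite /pick_member.
  by case: pickP => [C /andP[] //|/(_ B)]; rewrite BA xB.
exists (pick_member @: \bigcup_(A in calA) A); first split.
- by apply/subsetP=> _ /imsetP[x /pick_memberP[? _] ->].
- exact: leq_imset_card.
apply/subsetP=> x xU; have [_ x_pick] := pick_memberP x xU.
by apply/bigcupP; exists (pick_member x); first exact: imset_f.
Qed.

Lemma ler_mulrn_ceil_div (R : archiRealFieldType) (M m : R) :
  0 <= M -> 0 < m -> M <= m *+ `|Num.ceil (M / m)|%N.
Proof.
move=> M_ge0 m_gt0; have Mm_ge0 : 0 <= M / m by rewrite divr_ge0 // ltW.
rewrite -mulr_natr natr_absz ger0_norm; last first.
  by rewrite ceil_ge0 (lt_le_trans _ Mm_ge0) // ltrN10.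
by rewrite mulrC -ler_pdivrMr //; exact: ceil_ge.
Qed.

Section SubadditiveSetFunction.
Variables (R : archiRealFieldType) (r : nat) (rho : {set 'I_r} -> R).
Hypotheses (rho_subadd : subadditive rho) (rho_mono : monotone_incr rho)
  (rho_zero : zero_iff_empty rho).

Lemma rho_set0 : rho set0 = 0.
Proof. exact/rho_zero. Qed.

Lemma rho_ge0 S : 0 <= rho S.
Proof. by rewrite -rho_set0; apply: rho_mono; exact: sub0set. Qed.

Lemma rho_gt0 S : S != set0 -> 0 < rho S.
Proof.
move=> S_neq0; rewrite lt_def rho_ge0 andbT.
by apply: contra S_neq0 => /eqP/rho_zero->.
Qed.

Lemma rho_bigcup_le_sum (calA : {set {set 'I_r}}) :
  rho (\bigcup_(A in calA) A) <= \sum_(A in calA) rho A.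
Proof.
apply: (big_ind2 (fun U s => rho U <= s)) => //; first by rewrite rho_set0.
by move=> U1 s1 U2 s2 le1 le2; apply: le_trans (rho_subadd _ _) (lerD le1 le2).
Qed.

Lemma le_rho_max S : rho S <= rho_max rho.
Proof. by rewrite /rho_max (bigD1 S) //= le_max lexx. Qed.

Lemma rho_min_le S : S != set0 -> rho_min rho <= rho S.
Proof. by move=> S_neq0; rewrite /rho_min (bigD1 S) //= ge_min lexx. Qed.

Lemma rho_min_gt0 (S : {set 'I_r}) : S != set0 -> 0 < rho_min rho.
Proof.
move=> S_neq0; rewrite /rho_min.
apply: (big_ind (fun x => 0 < x)) => [||T]; last exact: rho_gt0.
- exact: lt_le_trans (rho_gt0 S_neq0) (le_rho_max S).
- by move=> x y x_gt0 y_gt0; rewrite lt_min x_gt0 y_gt0.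
Qed.

Definition rho_cover_le (calA : {set {set 'I_r}}) (n : nat) :=
  exists hatA : {set {set 'I_r}},
    [/\ hatA \subset calA, (#|hatA| <= n)%N &
        rho (\bigcup_(A in calA) A) <= \sum_(A in hatA) rho A].

Lemma rho_cover_le_r (calA : {set {set 'I_r}}) : rho_cover_le calA r.
Proof.
have [hatA [sub_hatA card_hatA] cover_hatA] := bigcup_point_subcover calA.
exists hatA; split=> //.
  by apply: leq_trans card_hatA (leq_trans (max_card _) _); rewrite card_ord.
by apply: le_trans (rho_bigcup_le_sum hatA); exact: rho_mono.
Qed.

Lemma rho_cover_le_ratio (calA : {set {set 'I_r}}) :
  {in calA, forall A, A != set0} ->
  rho_cover_le calA `|Num.ceil (rho_max rho / rho_min rho)|%N.
Proof.
set k := `|_|%N => calA_neq0.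
have [card_le|card_gt] := leqP #|calA| k.
  by exists calA; split=> //; exact: rho_bigcup_le_sum.
have [A0 A0_in] : {A0 | A0 \in calA}.
  by apply/sigW/set0Pn; rewrite -card_gt0 (leq_ltn_trans _ card_gt).
have /card_geqP[s [s_uniq size_s sub_s]] := ltnW card_gt.
exists [set A in s]; split.
- by apply/subsetP=> A; rewrite inE; exact: sub_s.
- by rewrite cardsE (card_uniqP s_uniq) size_s.
apply: le_trans (le_rho_max _) _.
apply: le_trans (ler_mulrn_ceil_div _ (rho_min_gt0 (calA_neq0 _ A0_in))) _.
  exact: le_trans (rho_ge0 set0) (le_rho_max set0).
rewrite -/k -size_s -(card_uniqP s_uniq) -cardsE -sumr_const.
by apply: ler_sum => A; rewrite inE => /sub_s/calA_neq0/rho_min_le.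
Qed.

End SubadditiveSetFunction.

Theorem proposition6p6 (R : archiRealFieldType) (r : nat) (rho : {set 'I_r} -> R)
    (Hsub : subadditive rho) (Hmono : monotone_incr rho) (Hzero : zero_iff_empty rho)
    (calA : {set {set 'I_r}}) (HA : forall A, A \in calA -> A != set0) :
  exists hatA : {set {set 'I_r}},
    [/\ hatA \subset calA, (#|hatA| <= lambda_rho rho)%N &
        rho (\bigcup_(A in calA) A) <= \sum_(A in hatA) rho A].
Proof.
set k := `|Num.ceil (rho_max rho / rho_min rho)|%N.
rewrite /lambda_rho -/k; case: (leqP k r) => _.
- exact: rho_cover_le_ratio.
- exact: rho_cover_le_r.
Qed.
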